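(* Let $(M,\cdot)$ be a moving semigroup. Then a set $A\subseteq M$ is IIP if and only if it is DIP.
   Context: $\beta M$ is the Stone–Čech compactification of the discrete semigroup $M$ with the usual extended operation; $(M,\cdot)$ is moving if $\beta M\setminus M$ is a subsemigroup of $\beta M$. For a sequence $(x_n)$ in $M$, $\mathrm{FP}(x_n)=\{x_{i_1}\cdots x_{i_k}: k\ge1,\ i_1<\cdots<i_k\}$. A set $A\subseteq M$ is IIP if there is a sequence $(x_n)$ in $M$ with $\mathrm{FP}(x_n)\subseteq A$ and $\mathrm{FP}(x_n)$ infinite. $A$ is DIP if there is an injective sequence $(x_n)$ in $M$ with $\mathrm{FP}(x_n)\subseteq A$. *)

(* Stone-Cech compactification of a discrete semigroup modelled
   as the set of ultrafilters on M, with the usual (right-topological)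
   extension of the operation:
     p . q = { A | { x | { y | x y in A } in q } in p }.
   Points of M are the principal ultrafilters, so beta M \ M is the set of
   non-principal ultrafilters. *)
From Stdlib Require Import List Sorting.Sorted Arith.
Import ListNotations.

Definition is_ultrafilter {M : Type} (U : (M -> Prop) -> Prop) : Prop :=
  (~ U (fun _ => False)) /\
  U (fun _ => True) /\
  (forall A B : M -> Prop, U A -> (forall x, A x -> B x) -> U B) /\
  (forall A B : M -> Prop, U A -> U B -> U (fun x => A x /\ B x)) /\
  (forall A : M -> Prop, U A \/ U (fun x => ~ A x)).

Definition is_principal {M : Type} (U : (M -> Prop) -> Prop) : Prop :=
  exists a : M, forall A : M -> Prop, U A <-> A a.

Definition ult_mul {M : Type} (op : M -> M -> M) (p q : (M -> Prop) -> Prop)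
  : (M -> Prop) -> Prop :=
  fun A => p (fun x => q (fun y => A (op x y))).

Definition is_semigroup {M : Type} (op : M -> M -> M) : Prop :=
  forall x y z, op x (op y z) = op (op x y) z.

Definition moving {M : Type} (op : M -> M -> M) : Prop :=
  forall p q, is_ultrafilter p -> is_ultrafilter q ->
    ~ is_principal p -> ~ is_principal q -> ~ is_principal (ult_mul op p q).

Definition FP {M : Type} (op : M -> M -> M) (x : nat -> M) (y : M) : Prop :=
  exists (i : nat) (l : list nat),
    StronglySorted lt (i :: l) /\
    y = fold_left (fun acc j => op acc (x j)) l (x i).

Definition infinite_set {M : Type} (S : M -> Prop) : Prop :=
  ~ exists l : list M, forall y, S y -> In y l.

Definition IIP {M : Type} (op : M -> M -> M) (A : M -> Prop) : Prop :=
  exists x : nat -> M,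
    (forall y, FP op x y -> A y) /\ infinite_set (FP op x).

Definition DIP {M : Type} (op : M -> M -> M) (A : M -> Prop) : Prop :=
  exists x : nat -> M,
    (forall n m, x n = x m -> n = m) /\ (forall y, FP op x y -> A y).

(* A DIP sequence is injective, so already its singleton products
   form an infinite subset of FP.  Conversely, if FP(x_n) is infinite then so
   is the set of products of x_n using only indices >= N, for every N, since
   dropping x_N covers it by finitely many translates of the next one.  Hence
   one can choose consecutive index blocks [K_0, K_1), [K_1, K_2), ... and in
   each block a product y_n that differs from y_0, ..., y_(n-1).  The y_n are
   pairwise distinct, and by associativity every product of y_n with
   increasing indices is a product of x_n with increasing indices. *)
From Stdlib Require Import List Sorting.Sorted Arith Lia Classical ClassicalEpsilon.
Import ListNotations.

Lemma StronglySorted_app (l1 l2 : list nat) :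
  StronglySorted lt l1 -> StronglySorted lt l2 ->
  (forall a b, In a l1 -> In b l2 -> a < b) -> StronglySorted lt (l1 ++ l2).
Proof.
  revert l2; induction l1 as [|a l1 IH]; intros l2 sorted1 sorted2 lt12; [exact sorted2|].
  apply StronglySorted_inv in sorted1 as [sorted1 head1].
  constructor.
  - apply IH; auto. intros u v Hu Hv. apply lt12; simpl; auto.
  - apply Forall_app; split; [exact head1|].
    apply Forall_forall. intros v Hv. apply lt12; simpl; auto.
Qed.

Section Semigroup.
Variables (M : Type) (op : M -> M -> M).

Section BlockProducts.
Hypothesis op_assoc : is_semigroup op.
Variable x : nat -> M.

Definition prod_along (l : list nat) (a : M) : M :=
  fold_left (fun acc j => op acc (x j)) l a.

Lemma prod_along_mul_l (l : list nat) (a b : M) :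
  prod_along l (op a b) = op a (prod_along l b).
Proof.
  revert a b; induction l as [|j l IH]; intros a b; [reflexivity|].
  unfold prod_along; simpl. rewrite <- op_assoc. apply IH.
Qed.

Definition block_prod (N K : nat) (y : M) : Prop :=
  exists i l, StronglySorted lt (i :: l) /\ N <= i /\
    Forall (fun j => j < K) (i :: l) /\ y = prod_along l (x i).

Definition tail_prod (N : nat) (y : M) : Prop := exists K, block_prod N K y.

Lemma tail_prod_antimono (N N' : nat) (y : M) :
  N' <= N -> tail_prod N y -> tail_prod N' y.
Proof.
  intros le_N [K [i [l [sorted [le_i [bounded ->]]]]]].
  exists K, i, l. repeat split; auto; lia.
Qed.

Lemma block_prod_tail_prod_mul (N K : nat) (a b : M) :
  block_prod N K a -> tail_prod K b -> tail_prod N (op a b).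
Proof.
  intros [i [l [sorted [le_i [bounded ->]]]]] [K' [j [m [sorted' [le_j [bounded' ->]]]]]].
  rewrite Forall_forall in bounded, bounded'.
  exists K', i, (l ++ j :: m). repeat split; [| exact le_i | |].
  - change (StronglySorted lt ((i :: l) ++ j :: m)).
    apply StronglySorted_app; auto.
    intros u v Hu [<- | Hv]; [specialize (bounded u Hu); lia|].
    apply StronglySorted_inv in sorted' as [_ head'].
    rewrite Forall_forall in head'. specialize (bounded u Hu); specialize (head' v Hv); lia.
  - apply Forall_forall. change (forall u, In u ((i :: l) ++ j :: m) -> u < K').
    intros u Hu. apply in_app_or in Hu as [Hu | Hu]; auto.
    specialize (bounded u Hu); specialize (bounded' j (or_introl eq_refl)); lia.
  - unfold prod_along. rewrite fold_left_app. simpl.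
    symmetry. apply (prod_along_mul_l m).
Qed.

Lemma FP_iff_tail_prod0 (y : M) : FP op x y <-> tail_prod 0 y.
Proof.
  split.
  - intros [i [l [sorted ->]]]. exists (S (list_max (i :: l))), i, l.
    repeat split; auto; [lia|].
    assert (bounded : Forall (fun k => k <= list_max (i :: l)) (i :: l))
      by (apply list_max_le; lia).
    eapply Forall_impl; [|exact bounded]. simpl; lia.
  - intros [K [i [l [sorted [_ [_ ->]]]]]]. exists i, l. auto.
Qed.

(* A tail product from N either is x_N, or avoids x_N, or is x_N times a tail
   product from N+1. *)
Lemma tail_prod_cover (N : nat) (L : list M) :
  (forall y, tail_prod (S N) y -> In y L) ->
  forall y, tail_prod N y -> In y (x N :: L ++ map (op (x N)) L).
Proof.
  intros covered y [K [i [l [sorted [le_i [bounded ->]]]]]].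
  destruct (Nat.eq_dec i N) as [-> | ne_i]; cycle 1.
  { right. apply in_or_app. left. apply covered.
    exists K, i, l. repeat split; auto; lia. }
  destruct l as [|j m]; [now left|].
  right. apply in_or_app. right.
  unfold prod_along; simpl. fold (prod_along m (op (x N) (x j))).
  rewrite prod_along_mul_l. apply in_map, covered.
  apply StronglySorted_inv in sorted as [sorted head]. inversion head; subst.
  inversion bounded; subst. exists K, j, m. repeat split; auto.
Qed.

Lemma infinite_tail_prod :
  infinite_set (FP op x) -> forall N, infinite_set (tail_prod N).
Proof.
  intros inf N; induction N as [|N IH]; intros [L covered].
  - apply inf. exists L. intros y Hy. apply covered, FP_iff_tail_prod0, Hy.
  - apply IH. eexists. apply tail_prod_cover. exact covered.
Qed.

Lemma exists_fresh_block_prod (N : nat) (vs : list M) :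
  infinite_set (tail_prod N) ->
  exists p : nat * M, block_prod N (fst p) (snd p) /\ ~ In (snd p) vs.
Proof.
  intros inf. apply NNPP. intros no_fresh. apply inf. exists vs.
  intros y [K HK]. apply NNPP. intros Hy. apply no_fresh. now exists (K, y).
Qed.

End BlockProducts.

Section FreshBlocks.
Hypothesis op_assoc : is_semigroup op.
Variable x : nat -> M.
Hypothesis FP_infinite : infinite_set (FP op x).

Definition fresh_block (N : nat) (vs : list M) : nat * M :=
  proj1_sig (constructive_indefinite_description _
    (exists_fresh_block_prod x N vs (infinite_tail_prod op_assoc x FP_infinite N))).

Lemma fresh_blockP (N : nat) (vs : list M) :
  block_prod x N (fst (fresh_block N vs)) (snd (fresh_block N vs)) /\
  ~ In (snd (fresh_block N vs)) vs.
Proof. unfold fresh_block. apply proj2_sig. Qed.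

(* Stage n records the lower end K_n of the next block and the values
   y_(n-1), ..., y_0 chosen so far. *)
Fixpoint stage (n : nat) : nat * list M :=
  match n with
  | 0 => (0, [])
  | S n => let p := fresh_block (fst (stage n)) (snd (stage n)) in
           (fst p, snd p :: snd (stage n))
  end.

Definition block_start (n : nat) : nat := fst (stage n).

Definition fresh_seq (n : nat) : M := snd (fresh_block (block_start n) (snd (stage n))).

Lemma fresh_seq_block (n : nat) :
  block_prod x (block_start n) (block_start (S n)) (fresh_seq n).
Proof. apply fresh_blockP. Qed.

Lemma block_start_lt (n : nat) : block_start n < block_start (S n).
Proof.
  destruct (fresh_seq_block n) as [i [l [_ [le_i [bounded _]]]]].
  inversion bounded; lia.
Qed.

Lemma block_start_mono (n m : nat) : n <= m -> block_start n <= block_start m.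
Proof. induction 1; [lia|]. pose proof (block_start_lt m); lia. Qed.

Lemma fresh_seq_in_stage (n m : nat) : m < n -> In (fresh_seq m) (snd (stage n)).
Proof.
  revert m; induction n as [|n IH]; intros m lt_m; [lia|].
  destruct (Nat.eq_dec m n) as [-> | ne]; [now left|].
  right. apply IH. lia.
Qed.

Lemma fresh_seq_inj (n m : nat) : fresh_seq n = fresh_seq m -> n = m.
Proof.
  intros eq_nm.
  destruct (Nat.lt_total n m) as [lt | [-> | lt]]; [exfalso | reflexivity | exfalso].
  - apply (proj2 (fresh_blockP (block_start m) (snd (stage m)))).
    fold (fresh_seq m). rewrite <- eq_nm. now apply fresh_seq_in_stage.
  - apply (proj2 (fresh_blockP (block_start n) (snd (stage n)))).
    fold (fresh_seq n). rewrite eq_nm. now apply fresh_seq_in_stage.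
Qed.

Lemma prod_along_fresh_seq (i : nat) (l : list nat) :
  StronglySorted lt (i :: l) ->
  tail_prod x (block_start i) (prod_along fresh_seq l (fresh_seq i)).
Proof.
  revert i; induction l as [|j m IH]; intros i sorted.
  - exists (block_start (S i)). apply fresh_seq_block.
  - unfold prod_along; simpl. fold (prod_along fresh_seq m (op (fresh_seq i) (fresh_seq j))).
    rewrite prod_along_mul_l by exact op_assoc.
    apply StronglySorted_inv in sorted as [sorted head]. inversion head; subst.
    apply (block_prod_tail_prod_mul op_assoc x _ (block_start (S i))); [apply fresh_seq_block|].
    apply (tail_prod_antimono _ (block_start j)); [apply block_start_mono; lia|].
    now apply IH.
Qed.

Lemma FP_fresh_seq_sub (z : M) : FP op fresh_seq z -> FP op x z.
Proof.
  intros [i [l [sorted ->]]]. apply FP_iff_tail_prod0.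
  apply (tail_prod_antimono _ (block_start i)); [lia|].
  now apply prod_along_fresh_seq.
Qed.

End FreshBlocks.

Lemma IIP_DIP (A : M -> Prop) : is_semigroup op -> IIP op A -> DIP op A.
Proof.
  intros op_assoc [x [FP_sub FP_infinite]].
  exists (fresh_seq op_assoc x FP_infinite). split.
  - apply fresh_seq_inj.
  - intros z Hz. apply FP_sub. eapply FP_fresh_seq_sub. exact Hz.
Qed.

Lemma injective_range_infinite (x : nat -> M) :
  (forall n m, x n = x m -> n = m) -> ~ exists L : list M, forall n, In (x n) L.
Proof.
  intros x_inj [L covered].
  assert (bound : forall k, S k <= length L).
  { intros k.
    replace (S k) with (length (map x (seq 0 (S k))))
      by now rewrite length_map, length_seq.
    apply NoDup_incl_length.
    - apply NoDup_map_NoDup_ForallPairs; [|apply seq_NoDup].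
      intros a b _ _; apply x_inj.
    - intros z Hz. apply in_map_iff in Hz as [n [<- _]]. apply covered. }
  specialize (bound (length L)); lia.
Qed.

Lemma DIP_IIP (A : M -> Prop) : DIP op A -> IIP op A.
Proof.
  intros [x [x_inj FP_sub]]. exists x. split; [exact FP_sub|].
  intros [L covered]. apply (injective_range_infinite x x_inj).
  exists L. intros n. apply covered. exists n, []. split; [repeat constructor | reflexivity].
Qed.

End Semigroup.

Theorem mainTheorem4 (M : Type) (op : M -> M -> M)
  (Hsg : is_semigroup op) (Hmov : moving op) (A : M -> Prop) :
  IIP op A <-> DIP op A.
Proof.
  split; [now apply IIP_DIP | apply DIP_IIP].
Qed.
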